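(* Let $\kappa$ be an infinite cardinal and let $S$ be the lattice of all finite subsets of $\kappa$ (ordered by inclusion). Then $\mathrm{ch}\text{-}\mathrm{Id}(S)$ is a lattice, and if $\kappa=\lambda^{\aleph_0}$ for some cardinal $\lambda$, then there exists a surjective upper semilattice homomorphism from $S$ onto $\mathrm{ch}\text{-}\mathrm{Id}(S)$ (regarded as an upper semilattice under its lattice join).
   Context: For a poset $P$ and $X\subseteq P$, write $P\downarrow X=\{y\in P\mid\exists x\in X,\ y\le x\}$. An ideal of $P$ is a (possibly empty) upward directed downset of $P$. $\mathrm{ch}\text{-}\mathrm{Id}(P)$ denotes the poset, ordered by inclusion, of all ideals of $P$ of the form $P\downarrow C$ with $C\subseteq P$ a chain (possibly empty). *)

From mathcomp Require Import all_boot.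
From mathcomp Require Export boolp classical_sets cardinality.
Set Implicit Arguments. Unset Strict Implicit. Unset Printing Implicit Defensive.
Local Open Scope classical_set_scope.

Section PosetNotions.
Variables (P : Type) (le : P -> P -> Prop).

Definition down (X : set P) : set P := fun y => exists x, X x /\ le y x.

Definition is_downset (I : set P) : Prop :=
  forall x y, I x -> le y x -> I y.

Definition is_updirected (I : set P) : Prop :=
  forall x y, I x -> I y -> exists z, I z /\ le x z /\ le y z.

(** ideal: possibly empty, upward directed downset *)
Definition is_ideal (I : set P) : Prop := is_downset I /\ is_updirected I.

Definition is_chain (C : set P) : Prop :=
  forall x y, C x -> C y -> le x y \/ le y x.

Definition chId (I : set P) : Prop :=
  is_ideal I /\ exists C : set P, is_chain C /\ I = down C.
End PosetNotions.

Definition is_lub_in {T} (Q : set T -> Prop) (I J U : set T) : Prop :=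
  Q U /\ I `<=` U /\ J `<=` U /\
  forall V, Q V -> I `<=` V -> J `<=` V -> U `<=` V.

Definition is_glb_in {T} (Q : set T -> Prop) (I J U : set T) : Prop :=
  Q U /\ U `<=` I /\ U `<=` J /\
  forall V, Q V -> V `<=` I -> V `<=` J -> V `<=` U.

Definition is_lattice_incl {T} (Q : set T -> Prop) : Prop :=
  forall I J, Q I -> Q J ->
    (exists U, is_lub_in Q I J U) /\ (exists W, is_glb_in Q I J W).

Definition finsub (K : Type) : Type := {A : set K | finite_set A}.
Definition finsub_le (K : Type) (s t : finsub K) : Prop := proj1_sig s `<=` proj1_sig t.

From Pilot Require Import Defs.
From mathcomp Require Import all_boot.
From mathcomp Require Import boolp classical_sets cardinality.

(** A chain of finite sets is countable (its members are
    determined by their sizes), so a nonempty ideal [S↓C] generated by a chain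
    [C] is [finsubs U] for the countable set [U = ⋃C]; conversely [finsubs U],
    for [U] countable, is generated by the chain of initial segments of an
    enumeration of [U].  Hence ch-Id(S) consists of the empty ideal and the
    [finsubs U] with [U] countable, with joins [finsubs (A ∪ B)] and meets
    [finsubs (A ∩ B)].  If [κ = λ^ℵ₀] then [κ^ℵ₀ = κ], so some [g] maps [κ] onto
    its countable subsets, and [s ↦ finsubs (⋃_{x ∈ s} g x)] (with [∅ ↦ ∅]) is
    a surjective join homomorphism from [S] onto ch-Id(S). *)

Set Implicit Arguments. Unset Strict Implicit. Unset Printing Implicit Defensive.
Local Open Scope classical_set_scope. Local Open Scope card_scope.

Lemma finite_set_ind T (P : set T -> Prop) : P set0 ->
  (forall A x, P A -> P (x |` A)) -> forall A, finite_set A -> P A.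
Proof.
move=> P0 PU A [n]; elim: n A => [|n IH] A.
  by rewrite II0 card_eq0 => /eqP ->.
by move=> /eq_cardSP [x Ax /IH PA]; rewrite -(setD1K Ax); exact: PU.
Qed.

Lemma subset_card_eq_II T (A B : set T) n :
  A `<=` B -> A #= `I_n -> B #= `I_n -> A = B.
Proof.
move=> AB An Bn; apply/seteqP; split => // x Bx; apply: contrapT => Ax.
have xAn : (x |` A) #= `I_n.+1.
  apply/eq_cardSP; exists x; first by left.
  by rewrite setUC setUDK // => y [->].
have : (x |` A) #<= B by apply: subset_card_le => y [->|/AB].
by rewrite (card_le_eql xAn) (card_le_eqr Bn) card_le_II ltnn.
Qed.

Lemma countableU T (A B : set T) :
  countable A -> countable B -> countable (A `|` B).
Proof.
move=> cA cB.
have : countable (\bigcup_(i in [set: bool]) (if i then A else B)).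
  by apply: bigcup_countable => // -[].
by apply/sub_countable/subset_card_le => x [Ax|Bx]; [exists true | exists false].
Qed.

Lemma countable_range T (A : set T) (a : T) :
  countable A -> A a -> exists h : nat -> T, range h = A.
Proof.
move=> /countable_injP [e ie] Aa.
pose h n := if pselect (exists2 x, A x & e x = n) is left H
            then projT1 (cid2 H) else a.
exists h; apply/seteqP; split.
  by move=> _ [n _ <-]; rewrite /h; case: pselect => // H; case: (projT2 (cid2 H)).
move=> x Ax; exists (e x) => //; rewrite /h; case: pselect => [H|[]]; last by exists x.
by case: (projT2 (cid2 H)) => Ay exy; apply: ie => //; exact: mem_set.
Qed.

Lemma finite_setI_preimage_II T (A : set T) (e : T -> nat) n :
  {in A &, injective e} -> finite_set (A `&` e @^-1` `I_n).
Proof.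
move=> ie; apply/finite_set_leP; exists n; apply/pcard_leP/injfunPex.
exists e; first by move=> x [].
by move=> x y /set_mem[Ax _] /set_mem[Ay _]; apply: ie; exact: mem_set.
Qed.

Section FiniteSubsets.
Variable K : Type.
Local Notation S := (finsub K).
Local Notation le := (@finsub_le K).
Local Notation chIdS := (chId le).

Definition finsubs (U : set K) : set S := fun s => proj1_sig s `<=` U.

Lemma finsub_inj : injective (fun s : S => proj1_sig s).
Proof. by move=> [A fA] [B fB] /= AB; exact: eq_exist. Qed.

Lemma chain_cover (C : set S) : is_chain le C -> C !=set0 ->
  forall A, finite_set A -> A `<=` \bigcup_(c in C) proj1_sig c ->
  exists2 c, C c & A `<=` proj1_sig c.
Proof.
move=> chC [c0 Cc0]; apply: finite_set_ind => [_|A x IH xAC].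
  by exists c0 => //; exact: sub0set.
have [c Cc Ac] := IH (subset_trans (@subsetUr _ [set x] A) xAC).
have [c' Cc' xc'] := xAC x (or_introl erefl).
have [cc'|c'c] := chC c c' Cc Cc'.
  by exists c' => // y [->|/Ac/cc'].
by exists c => // y [->|/Ac]; [exact: c'c|].
Qed.

Lemma down_chain (C : set S) : is_chain le C -> C !=set0 ->
  Defs.down le C = finsubs (\bigcup_(c in C) proj1_sig c).
Proof.
move=> chC C0; apply/seteqP; split => s.
  by case=> c [Cc sc] x /sc cx; exists c.
by move=> sC; have [c Cc sc] := chain_cover chC C0 (proj2_sig s) sC; exists c.
Qed.

Lemma countable_chain (C : set S) : is_chain le C -> countable C.
Proof.
move=> chC; apply/countable_injP.
pose size_of (c : S) := cid (proj2_sig c : exists n, proj1_sig c #= `I_n).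
exists (fun c => projT1 (size_of c)) => c1 c2 /set_mem C1 /set_mem C2 e12.
apply: finsub_inj.
move: (projT2 (size_of c1)) (projT2 (size_of c2)); rewrite e12 => h1 h2.
have [le12|le21] := chC _ _ C1 C2; first exact: subset_card_eq_II h1 h2.
by apply/esym; exact: subset_card_eq_II h2 h1.
Qed.

Lemma finsubs_ideal U : is_ideal le (finsubs U).
Proof.
split; first by move=> s t sU ts x /ts /sU.
move=> s t sU tU.
have fst : finite_set (proj1_sig s `|` proj1_sig t).
  by rewrite finite_setU; split; exact: proj2_sig.
by exists (exist _ _ fst); split; [move=> x [/sU|/tU] | split => x; [left|right]].
Qed.

Lemma chId0 : chIdS set0.
Proof.
split; first by split => [x y []|x y []].
by exists set0; split => //; apply/seteqP; split => s // [x []].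
Qed.

Lemma chId_finsubs U : countable U -> chIdS (finsubs U).
Proof.
move=> /countable_injP [e ie]; split; first exact: finsubs_ideal.
pose seg n : S := exist _ _ (finite_setI_preimage_II n ie).
have chain_seg : is_chain le (range seg).
  move=> _ _ [m _ <-] [n _ <-].
  by have [mn|nm] := leqP m n; [left|right] => x [Ux /= xe];
    split => //=; apply: leq_trans xe _ => //; exact: ltnW.
exists (range seg); split => //.
rewrite down_chain //; last by exists (seg 0).
congr finsubs; apply/seteqP; split => [x Ux|x [_ [n _ <-]] /= [] //].
by exists (seg (e x).+1); [exists (e x).+1 | rewrite /=].
Qed.

Lemma chId_cases I : chIdS I ->
  I = set0 \/ exists2 U, countable U & I = finsubs U.
Proof.
move=> [_ [C [chC ->]]].
have [C0|C0] := pselect (C !=set0).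
  right; exists (\bigcup_(c in C) proj1_sig c); last exact: down_chain.
  apply: bigcup_countable => [|c _]; first exact: countable_chain.
  exact: finite_set_countable (proj2_sig c).
by left; apply/seteqP; split => s // [c [Cc _]]; apply: C0; exists c.
Qed.

Lemma lub_finsubs A B : countable A -> countable B ->
  is_lub_in chIdS (finsubs A) (finsubs B) (finsubs (A `|` B)).
Proof.
move=> cA cB; split; first exact/chId_finsubs/countableU.
split; first by move=> s sA x /sA; left.
split; first by move=> s sB x /sB; right.
move=> V [[downV dirV] _] AV BV s sAB.
have fsA : finite_set (proj1_sig s `&` A) by exact: finite_setIl (proj2_sig s).
have fsB : finite_set (proj1_sig s `&` B) by exact: finite_setIl (proj2_sig s).
have VsA : V (exist _ _ fsA) by apply: AV => x [].
have VsB : V (exist _ _ fsB) by apply: BV => x [].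
have [z [Vz [sAz sBz]]] := dirV _ _ VsA VsB.
by apply: downV Vz _ => x sx; case: (sAB x sx) => [Ax|Bx];
  [apply: sAz | apply: sBz].
Qed.

Lemma glb_finsubs A B : countable A ->
  is_glb_in chIdS (finsubs A) (finsubs B) (finsubs (A `&` B)).
Proof.
move=> cA; split.
  by apply/chId_finsubs/(sub_countable _ cA)/subset_card_le; exact: subIsetl.
split; first by move=> s sAB x /sAB[].
split; first by move=> s sAB x /sAB[].
by move=> V _ VA VB s Vs x sx; split; [exact: VA Vs x sx | exact: VB Vs x sx].
Qed.

Lemma lub_set0l J : chIdS J -> is_lub_in chIdS set0 J J.
Proof. by move=> chJ; split => //; split => //; split. Qed.

Lemma lub_set0r J : chIdS J -> is_lub_in chIdS J set0 J.
Proof. by move=> chJ; split => //; split => //; split. Qed.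

Lemma glb_set0l J : is_glb_in chIdS set0 J set0.
Proof. by split; [exact: chId0 | split => //; split => // V _ V0]. Qed.

Lemma glb_set0r J : is_glb_in chIdS J set0 set0.
Proof. by split; [exact: chId0 | split => //; split => // V _ _ V0]. Qed.

Lemma chId_lattice : is_lattice_incl chIdS.
Proof.
move=> I J /chId_cases[->|[A cA ->]].
  by move=> chJ; split; [exists J; exact: lub_set0l | exists set0; exact: glb_set0l].
move=> /chId_cases[->|[B cB ->]].
  split; [exists (finsubs A) | exists set0; exact: glb_set0r].
  exact/lub_set0r/chId_finsubs.
by split; [exists (finsubs (A `|` B)); exact: lub_finsubs
          | exists (finsubs (A `&` B)); exact: glb_finsubs].
Qed.

Section JoinHomomorphism.
Variable g : K -> set K.
Hypothesis g_countable : forall k, countable (g k).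

Definition ideal_of (s : S) : set S :=
  if pselect (proj1_sig s = set0) then set0
  else finsubs (\bigcup_(x in proj1_sig s) g x).

Lemma ideal_of0 s : proj1_sig s = set0 -> ideal_of s = set0.
Proof. by rewrite /ideal_of; case: pselect. Qed.

Lemma ideal_ofN0 s : proj1_sig s <> set0 ->
  ideal_of s = finsubs (\bigcup_(x in proj1_sig s) g x).
Proof. by rewrite /ideal_of; case: pselect. Qed.

Lemma countable_bigcup_finsub (s : S) : countable (\bigcup_(x in proj1_sig s) g x).
Proof.
apply: bigcup_countable => [|x _]; last exact: g_countable.
exact: finite_set_countable (proj2_sig s).
Qed.

Lemma chId_ideal_of s : chIdS (ideal_of s).
Proof.
have [s0|s0] := pselect (proj1_sig s = set0).
  by rewrite ideal_of0 //; exact: chId0.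
by rewrite ideal_ofN0 //; exact/chId_finsubs/countable_bigcup_finsub.
Qed.

Lemma ideal_of_join s t u : proj1_sig u = proj1_sig s `|` proj1_sig t ->
  is_lub_in chIdS (ideal_of s) (ideal_of t) (ideal_of u).
Proof.
move=> u_st.
have [s0|s0] := pselect (proj1_sig s = set0).
  have -> : u = t by apply: finsub_inj; rewrite /= u_st s0 set0U.
  by rewrite ideal_of0 //; exact/lub_set0l/chId_ideal_of.
have [t0|t0] := pselect (proj1_sig t = set0).
  have -> : u = s by apply: finsub_inj; rewrite /= u_st t0 setU0.
  by rewrite (ideal_of0 t0); exact/lub_set0r/chId_ideal_of.
rewrite !ideal_ofN0 //; last by rewrite u_st setU_eq0 => -[].
by rewrite u_st bigcup_setU; apply: lub_finsubs; exact: countable_bigcup_finsub.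
Qed.

Hypothesis g_onto : forall V, countable V -> exists k, g k = V.

Lemma ideal_of_onto I : chIdS I -> exists s, ideal_of s = I.
Proof.
move=> /chId_cases[->|[V cV ->]].
  by exists (exist _ set0 (finite_set0 K)); rewrite ideal_of0.
have [k gk] := g_onto cV.
exists (exist _ [set k] (finite_set1 k)).
by rewrite ideal_ofN0 /= ?bigcup_set1 ?gk // => /seteqP[/(_ k erefl)].
Qed.

End JoinHomomorphism.
End FiniteSubsets.

Lemma infinite_two_points T : infinite_set [set: T] -> exists a b : T, a <> b.
Proof.
move=> infT; have [a _] := infinite_setN0 infT.
have [b [_ ba]] := infinite_setN0 (infinite_setD infT (finite_set1 a)).
by exists a, b => ab; apply: ba; rewrite ab.
Qed.

(* [κ^ℵ₀ = (λ^ℵ₀)^ℵ₀ = λ^(ℵ₀·ℵ₀) = κ], the pairing [ℵ₀·ℵ₀ = ℵ₀] being [pickle]. *)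
Lemma surj_seq_of_bij L T (G : (nat -> L) -> T) : bijective G ->
  exists D : T -> (nat -> T), forall w, exists k, D k = w.
Proof.
case=> G' GK G'K; exists (fun k i => G (fun j => G' k (pickle (i, j)))) => w.
exists (G (fun m => if unpickle m is Some (i, j) then G' (w i) j else G' (w 0) 0)).
apply: funext => i; rewrite GK.
by under eq_fun do rewrite pickleK; rewrite G'K.
Qed.

Lemma countable_set_decoding T (a b : T) : a <> b ->
  exists c : (nat -> T) -> set T,
    (forall w, countable (c w)) /\ (forall V, countable V -> exists w, c w = V).
Proof.
move=> ab.
exists (fun w => if pselect (w 0 = w 1) then set0 else range (fun n => w n.+2)).
split=> [w|V cV]; first by case: pselect => ?; [exact: countable0 | exact: card_image_le].
have [[v Vv]|V0] := pselect (V !=set0).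
  have [h <-] := countable_range cV Vv.
  exists (fun n => if n is n'.+2 then h n' else if n is 0 then a else b).
  by case: pselect.
exists (fun=> a); case: ifPn => [_|]; last by case: pselect.
by apply/seteqP; split=> // x Vx; apply: V0; exists x.
Qed.

Lemma countable_subsets_onto L K (G : (nat -> L) -> K) :
  infinite_set [set: K] -> bijective G ->
  exists g : K -> set K,
    (forall k, countable (g k)) /\ (forall V, countable V -> exists k, g k = V).
Proof.
move=> /infinite_two_points[a [b ab]] /surj_seq_of_bij[D D_onto].
have [c [c_countable c_onto]] := countable_set_decoding ab.
exists (c \o D); split=> [k|V /c_onto[w <-]]; first exact: c_countable.
by have [k <-] := D_onto w; exists k.
Qed.

Theorem lemma3p3 (K : Type) (hK : infinite_set [set: K]) :
  is_lattice_incl (@chId (finsub K) (@finsub_le K)) /\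
  ((exists (L : Type) (g : (nat -> L) -> K), bijective g) ->
   exists f : finsub K -> set (finsub K),
     (forall s, chId (@finsub_le K) (f s)) /\
     (forall I, chId (@finsub_le K) I -> exists s, f s = I) /\
     (forall s t u : finsub K,
        proj1_sig u = proj1_sig s `|` proj1_sig t ->
        is_lub_in (@chId (finsub K) (@finsub_le K)) (f s) (f t) (f u))).
Proof.
split; first exact: chId_lattice.
move=> [L [G bijG]].
have [g [g_countable g_onto]] := countable_subsets_onto hK bijG.
exists (ideal_of g); split; first exact: chId_ideal_of.
split; first by move=> I /(ideal_of_onto g_onto).
exact: ideal_of_join.
Qed.
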